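(* For integers $m\ge1$, $n\ge2$ and real $\alpha\notin\pi\mathbb{Z}$, $$\sum_{k=0}^{n-1}\cot^m\frac{\alpha+k\pi}{n}=(-1)^{m/2}\,n\,\mathbb{1}_{m\text{ even}}+\frac{1}{(m-1)!}\sum_{k=1}^m n^kA_m^{(k)}P_{k-1}(\cot\alpha).$$
   Context: The arctangent numbers $A_m^{(k)}$ are defined by $\frac{(\arctan z)^k}{k!}=\sum_{m\ge k}\frac{A_m^{(k)}}{m!}z^m$. The derivative polynomials $P_k$ are defined by $P_0(x)=x$, $P_{k+1}(x)=(1+x^2)P_k'(x)$, equivalently $\frac{d^k}{dz^k}\tan z=P_k(\tan z)$. $\mathbb{1}_{m\text{ even}}$ is $1$ if $m$ is even and $0$ otherwise. *)

From HB Require Import structures.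
From mathcomp Require Import all_boot all_order all_algebra.
From mathcomp Require Import all_classical all_reals all_analysis.
Set Implicit Arguments. Unset Strict Implicit. Unset Printing Implicit Defensive.
Import Order.TTheory GRing.Theory Num.Theory.
Local Open Scope ring_scope.

Section Defs.
Variable R : realType.

Definition cot (x : R) : R := cos x / sin x.

(* Taylor coefficients of arctan z = sum_j (-1)^j z^(2j+1)/(2j+1) *)
Definition atan_coef (i : nat) : R :=
  if odd i then (-1) ^+ i./2 / i%:R else 0.

Definition atan_trunc (m : nat) : {poly R} := \poly_(i < m.+1) atan_coef i.

(* Arctangent numbers: (arctan z)^k / k! = sum_m A_m^(k) z^m / m!, i.e.
   A_m^(k) = m!/k! * [z^m] (arctan z)^k ; the coefficient of z^m of the
   formal power series (arctan z)^k only depends on the coefficients of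
   arctan z of degree <= m, hence is read off the truncation. *)
Definition arctan_number (m k : nat) : R :=
  (m`!%:R / k`!%:R) * ((atan_trunc m) ^+ k)`_m.

Fixpoint derivP (k : nat) : {poly R} :=
  match k with
  | 0 => 'X
  | k'.+1 => (1 + 'X ^+ 2) * (derivP k')^`()
  end.

End Defs.

From HB Require Import structures.
From mathcomp Require Import all_boot all_order all_algebra.
From mathcomp Require Import all_classical all_reals all_analysis.
From mathcomp Require Import zify ring lra.
Import Order.TTheory GRing.Theory Num.Theory.
Set Implicit Arguments.
Unset Strict Implicit.
Unset Printing Implicit Defensive.
Local Open Scope ring_scope.

(** Let S_m(a) = \sum_k cot^m ((a + k pi) / n).  Since cot' = -(1 + cot^2),
    S_m' = -(m/n) (S_(m-1) + S_(m+1)), so S_(m+1) is determined by S_(m-1) and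
    S_m.  Starting from S_0 = n and S_1 = n cot a (the cot ((a + k pi) / n) are
    the n roots of sin a Re (X + i)^n - cos a Im (X + i)^n, so Vieta applies),
    S_m = G_m(cot a) for the polynomials G_m with
    G_(m+1) = -G_(m-1) + (n/m) (1 + X^2) G_m'.  The right-hand side of the
    theorem satisfies this recurrence because P_(k+1) = (1 + X^2) P_k' and
    A_(m+1)^(k+1) = A_m^(k) - m (m-1) A_(m-1)^(k+1), which is the coefficient
    of z^m in (1 + z^2) ((arctan z)^(k+1))' = (k+1) (arctan z)^k. *)

Lemma dvdXnP (R : fieldType) (N : nat) (p : {poly R}) :
  reflect (forall i, (i < N)%N -> p`_i = 0) ('X^N %| p).
Proof.
apply: (iffP idP) => [/dvdpP[q ->] i iN | p_low]; first by rewrite coefMXn iN.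
rewrite -(poly_take_drop N p); apply: dvdp_add; last exact: dvdp_mull.
suff -> : take_poly N p = 0 by rewrite dvdp0.
by apply/polyP => i; rewrite coef_take_poly coef0; case: ifP => // /p_low.
Qed.

Lemma coef_1DX2M_deriv (R : nzRingType) (p : {poly R}) m :
  ((1 + 'X^2) * p^`())`_m = p`_m.+1 *+ m.+1 + p`_m.-1 *+ m.-1.
Proof.
rewrite mulrDl mul1r coefD coefXnM !coef_deriv.
by case: m => [|[|m]] //=; rewrite ?mulr0n ?subn2.
Qed.

Lemma natr_fact_neq0 (R : numDomainType) k : k`!%:R != 0 :> R.
Proof. by rewrite pnatr_eq0 -lt0n fact_gt0. Qed.

Section ArctanNumbers.
Variable R : realType.
Local Notation T := (atan_trunc R).
Local Notation A := (arctan_number R).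

Lemma coef_atan_trunc N i : (T N)`_i = if (i <= N)%N then atan_coef R i else 0.
Proof. by rewrite coef_poly. Qed.

Lemma dvdX_atan_trunc N : 'X %| T N.
Proof. by rewrite -['X]expr1; apply/dvdXnP => -[|//] _; rewrite coef_atan_trunc. Qed.

Lemma dvdXn_atan_truncB m N : (m <= N)%N -> 'X^(m.+1) %| T N - T m.
Proof.
move=> mN; apply/dvdXnP => i; rewrite ltnS => im.
by rewrite coefB !coef_atan_trunc im (leq_trans im mN) subrr.
Qed.

Lemma coef_atan_truncX m N k : (m <= N)%N -> ((T N) ^+ k)`_m = ((T m) ^+ k)`_m.
Proof.
move=> mN; apply/eqP; rewrite -subr_eq0 -coefB subrXX; apply/eqP.
exact: (elimT (dvdXnP _ _) (dvdp_mulr _ (dvdXn_atan_truncB mN))) m (ltnSn m).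
Qed.

Lemma atan_coefS_mulrn i :
  atan_coef R i.+1 *+ i.+1 = if odd i then 0 else (-1) ^+ i./2.
Proof.
rewrite /atan_coef /=; case: (boolP (odd i)) => oi /=; first by rewrite mul0rn.
by rewrite -[_ *+ i.+1]mulr_natr divfK ?pnatr_eq0 // uphalf_half (negbTE oi).
Qed.

Lemma dvdXn_deriv_atan_trunc N : 'X^N %| (1 + 'X^2) * (T N)^`() - 1.
Proof.
apply/dvdXnP => i iN; rewrite coefB coef_1DX2M_deriv coef1 !coef_atan_trunc.
rewrite iN (leq_trans (leq_pred i) (ltnW iN)) atan_coefS_mulrn.
case: i {iN} => [|[|i]] /=; rewrite ?mulr0n ?addr0 ?subrr //.
rewrite atan_coefS_mulrn subr0 negbK.
by case: ifP => _; rewrite ?addr0 // exprS mulN1r addNr.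
Qed.

Lemma arctan_number_gt m k : (m < k)%N -> A m k = 0.
Proof.
move=> mk; rewrite /arctan_number; case/dvdpP: (dvdX_atan_trunc m) => q ->.
by rewrite exprMn coefMXn mk mulr0.
Qed.

Lemma arctan_number_m0 m : (0 < m)%N -> A m 0 = 0.
Proof. by case: m => // m _; rewrite /arctan_number expr0 coef1 mulr0. Qed.

Lemma arctan_number11 : A 1 1 = 1.
Proof. by rewrite /arctan_number expr1 coef_atan_trunc /atan_coef /= !(divr1, mul1r). Qed.

(* Coefficient m of (1 + z^2) (arctan^(k+1))' = (k+1) arctan^k. *)
Lemma coef_atan_truncX_rec m k :
  ((T m.+1) ^+ k.+1)`_m.+1 *+ m.+1 + ((T m.+1) ^+ k.+1)`_m.-1 *+ m.-1
  = ((T m.+1) ^+ k)`_m *+ k.+1.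
Proof.
rewrite -coef_1DX2M_deriv deriv_exp /= mulrnAr coefMn [_^`() * _]mulrC mulrCA.
have /dvdXnP/(_ m (ltnSn m)) :
    'X^(m.+1) %| T m.+1 ^+ k * ((1 + 'X^2) * (T m.+1)^`() - 1).
  exact/dvdp_mull/dvdXn_deriv_atan_trunc.
by rewrite mulrBr mulr1 coefB => /eqP; rewrite subr_eq0 => /eqP ->.
Qed.

Lemma arctan_numberS m k : A m.+1 k.+1 = A m k - (m * m.-1)%:R * A m.-1 k.+1.
Proof.
have := coef_atan_truncX_rec m k; rewrite /arctan_number.
rewrite -(coef_atan_truncX k (leqnSn m)).
rewrite -(coef_atan_truncX k.+1 (leq_trans (leq_pred m) (leqnSn m))).
move: ((T m.+1) ^+ k.+1)`_m.+1 ((T m.+1) ^+ k.+1)`_m.-1 ((T m.+1) ^+ k)`_m => x y z rec.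
have -> : z = (x *+ m.+1 + y *+ m.-1) / k.+1%:R.
  by rewrite rec -[z *+ _]mulr_natr mulfK ?pnatr_eq0.
by case: m {rec} => [|m] /=; rewrite !factS !natrM; field;
  rewrite natr_fact_neq0 nat1r pnatr_eq0.
Qed.
End ArctanNumbers.

Section CotPowerSumPoly.
Variables (R : realType) (n : nat).
Local Notation A := (arctan_number R).
Local Notation P := (derivP R).

Definition cotsum_const (m : nat) : R := if ~~ odd m then (-1) ^+ m./2 * n%:R else 0.

Definition arctan_derivP_sum (m : nat) : {poly R} :=
  \sum_(k < m) (n%:R ^+ k.+1 * A m k.+1) *: P k.

Lemma arctan_derivP_sum_widen m N : (m <= N)%N ->
  arctan_derivP_sum m = \sum_(k < N) (n%:R ^+ k.+1 * A m k.+1) *: P k.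
Proof.
move=> mN; rewrite /arctan_derivP_sum -(subnKC mN) big_split_ord /=.
rewrite [X in _ + X]big1 ?addr0 // => k _.
by rewrite arctan_number_gt ?mulr0 ?scale0r // ltnS leq_addr.
Qed.

Lemma arctan_derivP_sumS m : (0 < m)%N ->
  arctan_derivP_sum m.+1 = n%:R *: ((1 + 'X^2) * (arctan_derivP_sum m)^`())
                           - (m * m.-1)%:R *: arctan_derivP_sum m.-1.
Proof.
move=> m_gt0.
have -> : n%:R *: ((1 + 'X^2) * (arctan_derivP_sum m)^`())
          = \sum_(k < m.+1) (n%:R ^+ k.+1 * A m k) *: P k.
  rewrite big_ord_recl /= arctan_number_m0 // mulr0 scale0r add0r.
  rewrite /arctan_derivP_sum raddf_sum mulr_sumr scaler_sumr.
  apply: eq_bigr => k _ /=.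
  by rewrite /bump leq0n add1n add0n derivZ -scalerAr scalerA [in RHS]exprS mulrA.
rewrite (arctan_derivP_sum_widen (leq_trans (leq_pred m) (leqnSn m))).
rewrite /arctan_derivP_sum scaler_sumr -sumrB; apply: eq_bigr => k _.
by rewrite arctan_numberS !scalerA -scalerBl; congr (_ *: _); ring.
Qed.

Lemma cotsum_constSS m : cotsum_const m.+2 = - cotsum_const m.
Proof.
rewrite /cotsum_const /= negbK.
by case: odd; rewrite ?oppr0 // exprS mulN1r mulNr.
Qed.

Definition cotsum_poly (m : nat) : {poly R} :=
  (cotsum_const m)%:P + (m.-1)`!%:R^-1 *: arctan_derivP_sum m.

Lemma cotsum_poly0 : cotsum_poly 0 = n%:R%:P.
Proof. by rewrite /cotsum_poly /arctan_derivP_sum big_ord0 scaler0 addr0 /cotsum_const /= mul1r. Qed.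

Lemma cotsum_poly1 : cotsum_poly 1 = n%:R *: 'X.
Proof.
rewrite /cotsum_poly /arctan_derivP_sum big_ord1 arctan_number11 /cotsum_const /=.
by rewrite add0r invr1 scale1r mulr1.
Qed.

Lemma cotsum_polyS m : (0 < m)%N ->
  cotsum_poly m.+1
  = - cotsum_poly m.-1 + (n%:R / m%:R) *: ((1 + 'X^2) * (cotsum_poly m)^`()).
Proof.
move=> m_gt0; rewrite /cotsum_poly arctan_derivP_sumS // derivD derivC add0r derivZ.
have -> : cotsum_const m.+1 = - cotsum_const m.-1 by rewrite -cotsum_constSS prednK.
rewrite polyCN -scalerAr !scalerBr !scalerA opprD -addrA; congr (_ + _).
have mfact := natr_fact_neq0 R (m.-1).
rewrite addrC; congr (_ + _).
  congr (_ *: _); case: m m_gt0 mfact => // m _ /= mfact.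
  by rewrite factS natrM; field; rewrite mfact nat1r pnatr_eq0.
case: m m_gt0 {mfact} => [|[|m]] _ //=.
  by rewrite /arctan_derivP_sum big_ord0 !scaler0.
congr (- (_ *: _)); rewrite !factS !natrM; field.
by rewrite natr_fact_neq0 nat1r -natrD !pnatr_eq0.
Qed.
End CotPowerSumPoly.

Section Trigonometry.
Variable R : realType.
Implicit Types (a t x : R) (j k : nat).

Lemma sin_mulrn_eq0 t j : sin t = 0 -> sin (t *+ j) = 0.
Proof.
move=> st0; elim: j => [|j ih]; first by rewrite mulr0n sin0.
by rewrite mulrS sinD ih st0 !(mul0r, mulr0) addr0.
Qed.

Lemma sinD_natpi a k : sin (a + k%:R * pi) = (-1) ^+ k * sin a.
Proof. by rewrite mulr_natl (alternatingn (@sinDpi R)). Qed.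

Lemma normr_sinDzpi x (z : int) : `|sin (x + z%:~R * pi)| = `|sin x|.
Proof.
case: z => k; first by rewrite sinD_natpi normrM normr_sign mul1r.
rewrite NegzE intrN mulNr -[in RHS](subrK (k.+1%:R * pi) x) sinD_natpi.
by rewrite normrM normr_sign mul1r.
Qed.

Lemma sin_eq0_intpi x : sin x = 0 -> exists z : int, x = z%:~R * pi.
Proof.
move=> sx0; set z := Num.floor (x / pi); exists z.
have pi_gt0 := @pi_gt0 R.
have z_le : z%:~R * pi <= x by rewrite -ler_pdivlMr // floor_le.
have lt_z1 : x < z%:~R * pi + pi.
  by have := floorD1_gt (x / pi); rewrite -/z intrD /= ltr_pdivrMr // mulrDl mul1r.
have : sin (x - z%:~R * pi) = 0.
  by apply/normr0_eq0; rewrite -mulNr -intrN normr_sinDzpi sx0 normr0.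
have [b_gt0 | b_le0] := ltrP 0 (x - z%:~R * pi); last by lra.
by move/eqP; rewrite gt_eqF // sin_gt0_pi // b_gt0 /=; lra.
Qed.
End Trigonometry.

Section CotangentSum.
Variable R : realType.
Implicit Types (a t : R) (n j k : nat).

(* Real and imaginary parts of (X + i)^j. *)
Fixpoint cos_sin_mul_poly j : {poly R} * {poly R} :=
  if j is j'.+1 then
    let p := cos_sin_mul_poly j' in ('X * p.1 - p.2, 'X * p.2 + p.1)
  else (1, 0).

Local Notation U j := (cos_sin_mul_poly j).1.
Local Notation V j := (cos_sin_mul_poly j).2.

Lemma cos_sin_mul_polyE t j : sin t != 0 ->
  cos (t *+ j) = sin t ^+ j * (U j).[cot t] /\ sin (t *+ j) = sin t ^+ j * (V j).[cot t].
Proof.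
move=> st; elim: j => [|j [ihc ihs]]; first by rewrite mulr0n cos0 sin0 /= !hornerE.
rewrite mulrS cosD sinD ihc ihs /= !(hornerD, hornerN, hornerM, hornerX) /cot exprS.
by split; field.
Qed.

Lemma cos_sin_mul_poly_coef j :
  [/\ forall i, (j < i)%N -> (U j)`_i = 0, (U j)`_j = 1,
      (0 < j)%N -> (U j)`_j.-1 = 0,
      forall i, (j <= i)%N -> (V j)`_i = 0 & (V j)`_j.-1 = j%:R].
Proof.
elim: j => [|j [U_gt Uj Uj1 V_ge Vj1]].
  split=> //=; rewrite ?coef1 ?coef0 //; first by case=> // i _; rewrite coef1.
  by move=> i _; rewrite coef0.
split=> [i|||i|] /=; rewrite ?coefB ?coefD !coefXM.
- by case: i => // i ji /=; rewrite U_gt ?V_ge ?subr0 //; lia.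
- by rewrite Uj V_ge ?subr0.
- case: j {U_gt Uj Vj1} Uj1 V_ge => [|j] Uj1 V_ge _ /=; first by rewrite coef0 subr0.
  by rewrite Uj1 // V_ge ?subr0.
- by case: i => // i ji /=; rewrite V_ge ?U_gt ?addr0.
- case: j {U_gt Uj1 V_ge} Uj Vj1 => [|j] Uj Vj1 /=; first by rewrite add0r coef1.
  by rewrite Vj1 Uj natr1.
Qed.

Definition theta n a k : R := (a + k%:R * pi) / n%:R.

Lemma theta_mulrn n a k : (0 < n)%N -> theta n a k *+ n = a + k%:R * pi.
Proof. by move=> n_gt0; rewrite -[_ *+ n]mulr_natr divfK // pnatr_eq0 -lt0n. Qed.


Lemma sin_theta_neq0 n a k : (0 < n)%N -> sin a != 0 -> sin (theta n a k) != 0.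
Proof.
move=> n_gt0 sa; apply/eqP => /(sin_mulrn_eq0 n)/eqP.
by rewrite theta_mulrn // sinD_natpi mulf_eq0 signr_eq0 (negbTE sa).
Qed.

(* theta n a k - theta n a j = (k - j) pi / n lies in (0, pi). *)
Lemma cot_theta_neq n a j k : (0 < n)%N -> sin a != 0 -> (j < k)%N -> (k < n)%N ->
  cot (theta n a j) != cot (theta n a k).
Proof.
move=> n_gt0 sa jk kn.
have sj := sin_theta_neq0 j n_gt0 sa; have sk := sin_theta_neq0 k n_gt0 sa.
rewrite /cot eqr_div // mulrC; apply/eqP => E.
have : sin (theta n a k - theta n a j) = 0 by rewrite sinB E subrr.
have -> : theta n a k - theta n a j = (k - j)%N%:R / n%:R * pi.
  by rewrite /theta natrB 1?ltnW //; field; rewrite pnatr_eq0 -lt0n.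
apply/eqP; rewrite gt_eqF // sin_gt0_pi // mulr_gt0 ?pi_gt0 ?divr_gt0 ?ltr0n ?subn_gt0 //=.
by rewrite gtr_pMl ?pi_gt0 // ltr_pdivrMr ?ltr0n // mul1r ltr_nat; lia.
Qed.

Definition theta_poly n a : {poly R} := sin a *: U n - cos a *: V n.

Lemma theta_poly_coef n a :
  [/\ forall i, (n < i)%N -> (theta_poly n a)`_i = 0, (theta_poly n a)`_n = sin a
    & (0 < n)%N -> (theta_poly n a)`_n.-1 = - (cos a * n%:R)].
Proof.
have [U_gt Un Un1 V_ge Vn1] := cos_sin_mul_poly_coef n.
split=> [i ni||n_gt0]; rewrite coefB !coefZ.
- by rewrite U_gt ?V_ge ?mulr0 ?subr0 // ltnW.
- by rewrite Un V_ge ?mulr0 ?subr0 ?mulr1.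
- by rewrite Un1 // Vn1 mulr0 sub0r.
Qed.

Lemma size_theta_poly n a : sin a != 0 -> size (theta_poly n a) = n.+1.
Proof.
have [Q_gt Qn _] := theta_poly_coef n a; move=> sa.
apply/anti_leq/andP; split; first by apply/leq_sizeP => i; apply: Q_gt.
by rewrite ltnNge; apply: contra sa => /leq_sizeP/(_ n (leqnn n)); rewrite Qn => ->.
Qed.

(* sin t ^+ n * (theta_poly n a).[cot t] = sin (a - t *+ n) *)
Lemma root_theta_poly n a k : (0 < n)%N -> sin a != 0 ->
  root (theta_poly n a) (cot (theta n a k)).
Proof.
move=> n_gt0 sa; have st := sin_theta_neq0 k n_gt0 sa.
have [cos_n sin_n] := cos_sin_mul_polyE n st.
suff : sin (theta n a k) ^+ n * (theta_poly n a).[cot (theta n a k)] = 0.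
  by move/eqP; rewrite mulf_eq0 expf_eq0 (negbTE st) andbF.
rewrite !(hornerD, hornerN, hornerZ) mulrBr.
rewrite [_ * (sin a * _)]mulrCA [_ * (cos a * _)]mulrCA -cos_n -sin_n -sinB.
by rewrite theta_mulrn // opprD addrA subrr add0r sinN -[_ * pi]add0r sinD_natpi sin0 mulr0 oppr0.
Qed.

Lemma sum_cot_theta n a : (0 < n)%N -> sin a != 0 ->
  \sum_(k < n) cot (theta n a k) = n%:R * cot a.
Proof.
move=> n_gt0 sa; have [_ Qn Qn1] := theta_poly_coef n a.
pose rs := [seq cot (theta n a k) | k <- iota 0 n].
have size_rs : size rs = n by rewrite size_map size_iota.
have rs_roots : all (root (theta_poly n a)) rs.
  by apply/allP => _ /mapP[k _ ->]; apply: root_theta_poly.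
have rs_uniq : uniq_roots rs.
  rewrite uniq_rootsE map_inj_in_uniq ?iota_uniq // => j k.
  rewrite !mem_iota !add0n => /andP[_ jn] /andP[_ kn] E.
  case: (ltngtP j k) => // [jk|kj].
    by have := cot_theta_neq n_gt0 sa jk kn; rewrite E eqxx.
  by have := cot_theta_neq n_gt0 sa kj jn; rewrite E eqxx.
have size_Q : size (theta_poly n a) = (size rs).+1 by rewrite size_theta_poly // size_rs.
have := all_roots_prod_XsubC size_Q rs_roots rs_uniq.
move/(congr1 (fun p : {poly R} => p`_(size rs).-1)).
rewrite coefZ coefPn_prod_XsubC ?size_rs -?lt0n // Qn1 // lead_coefE size_theta_poly //= Qn.
rewrite big_map -(big_mkord xpredT (fun k => cot (theta n a k))) /index_iota subn0.
by rewrite mulrN => /oppr_inj E; apply: (mulfI sa); rewrite -E /cot; field.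
Qed.
End CotangentSum.

Section CotPowerSum.
Variable R : realType.
Implicit Types (a x : R) (n m : nat).

Lemma is_derive_cot x : sin x != 0 -> is_derive x 1 (@cot R) (- (1 + cot x ^+ 2)).
Proof.
move=> sx; have cotE : @cot R = cos * (fun y => (sin y)^-1) by apply/funext.
have := is_deriveM (is_derive_cos x) (is_deriveV sx (is_derive_sin x)).
by rewrite -cotE => /is_derive_eq; apply; rewrite /cot /GRing.scale /=; field.
Qed.

Lemma is_derive_horner_cot (p : {poly R}) x : sin x != 0 ->
  is_derive x 1 (fun a => p.[cot a]) (p^`().[cot x] * - (1 + cot x ^+ 2)).
Proof. by move=> sx; apply: (is_derive1_comp (f := horner p)); apply: is_derive_cot. Qed.

Definition cot_power_sum n m a := \sum_(k < n) cot (theta n a k) ^+ m.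

Lemma is_derive_cot_power_sum n m x : (0 < n)%N -> (0 < m)%N -> sin x != 0 ->
  is_derive x 1 (cot_power_sum n m)
    (- (m%:R / n%:R) * (cot_power_sum n m.-1 x + cot_power_sum n m.+1 x)).
Proof.
move=> n_gt0 m_gt0 sx.
have -> : cot_power_sum n m = \sum_(k < n) ((@cot R) \o (fun a => theta n a k)) ^+ m.
  by apply/funext => a; rewrite fct_sumE; apply: eq_bigr => k _; rewrite exprfctE.
apply: is_derive_eq.
  apply: is_derive_sum => k; apply: is_deriveX; apply: is_derive1_comp.
  exact/is_derive_cot/sin_theta_neq0.
rewrite /cot_power_sum -big_split /= mulr_sumr; apply: eq_bigr => k _.
rewrite /GRing.scale /= mulr0 add0r addr0 mulr1.
case: m m_gt0 => // m _ /=; rewrite !exprS; field.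
by rewrite pnatr_eq0 -lt0n.
Qed.

Lemma cot_power_sumS n m a : (0 < n)%N -> (0 < m)%N -> sin a != 0 ->
  (forall x, sin x != 0 -> cot_power_sum n m.-1 x = (cotsum_poly R n m.-1).[cot x]) ->
  (forall x, sin x != 0 -> cot_power_sum n m x = (cotsum_poly R n m).[cot x]) ->
  cot_power_sum n m.+1 a = (cotsum_poly R n m.+1).[cot a].
Proof.
move=> n_gt0 m_gt0 sa IHpred IH.
have dS := is_derive_cot_power_sum n_gt0 m_gt0 sa.
have dG : is_derive a 1 (cot_power_sum n m)
    ((cotsum_poly R n m)^`().[cot a] * - (1 + cot a ^+ 2)).
  apply: near_eq_is_derive (is_derive_horner_cot _ sa).
  by apply: filterS (cvgr_neq0 _ (@continuous_sin R a) sa) => y sy; rewrite IH.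
have := etrans (esym (derive_val (is_derive := dS))) (derive_val (is_derive := dG)).
rewrite IHpred // cotsum_polyS //.
move: (cotsum_poly R n m.-1) (cotsum_poly R n m) => g0 g.
rewrite !(hornerD, hornerN, hornerX, hornerC, horner_exp, hornerZ, hornerM).
set c := cot a; set s := cot_power_sum n m.+1 a => dE.
have n0 : n%:R != 0 :> R by rewrite pnatr_eq0 -lt0n.
have m0 : m%:R != 0 :> R by rewrite pnatr_eq0 -lt0n.
suff <- : g0.[c] + s = n%:R / m%:R * ((1 + c ^+ 2) * g^`().[c]) by rewrite addKr.
have k0 : - (m%:R / n%:R) != 0 :> R by rewrite oppr_eq0 mulf_neq0 ?invr_eq0.
by apply: (mulfI k0); rewrite dE; field; rewrite m0 n0.
Qed.

Lemma cot_power_sumE n m a : (0 < n)%N -> sin a != 0 ->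
  cot_power_sum n m a = (cotsum_poly R n m).[cot a].
Proof.
move=> n_gt0; elim/ltn_ind: m a => -[|[|m]] IH a sa.
- rewrite cotsum_poly0 hornerC /cot_power_sum.
  by under eq_bigr do rewrite expr0; rewrite sumr_const card_ord.
- rewrite cotsum_poly1 hornerZ hornerX /cot_power_sum.
  by under eq_bigr do rewrite expr1; apply: sum_cot_theta.
- by apply: cot_power_sumS => // x sx; apply: IH.
Qed.

End CotPowerSum.

Theorem corollary6p3 (R : realType) (m n : nat) (alpha : R) :
  (1 <= m)%N -> (2 <= n)%N ->
  (forall z : int, alpha != z%:~R * pi) ->
  \sum_(k < n) cot ((alpha + k%:R * pi) / n%:R) ^+ m =
    (if ~~ odd m then (-1) ^+ m./2 * n%:R else 0)
    + (m.-1)`!%:R^-1 *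
      \sum_(1 <= k < m.+1) n%:R ^+ k * arctan_number R m k
                            * (derivP R k.-1).[cot alpha].
Proof.
(* The identity also holds for m = 0. *)
move=> _ n_ge2 alpha_notin_piZ.
have sin_alpha : sin alpha != 0.
  by apply/eqP => /sin_eq0_intpi[z alphaE]; move/eqP: (alpha_notin_piZ z).
have := cot_power_sumE m (ltnW n_ge2) sin_alpha; rewrite /cot_power_sum /theta => ->.
rewrite /cotsum_poly hornerD hornerC hornerZ; congr (_ + _ * _).
rewrite /arctan_derivP_sum horner_sum big_add1 /= big_mkord.
by apply: eq_bigr => k _; rewrite hornerZ.
Qed.
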